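(* There exists an asymptotically dense infinite discrete set $\Lambda\subset[0,+\infty)$ such that for any open set $G\subset\mathbb{R}$ one can select a function $f_G\in C_0^+(\mathbb{R})$ such that $D(f_G,\Lambda)=G$.
   Context: For a discrete set $\Lambda\subset[0,\infty)$ and measurable $f:\mathbb{R}\to[0,+\infty)$, put $s(x)=\sum_{\lambda\in\Lambda}f(x+\lambda)$ and $D(f,\Lambda)=\{x\in\mathbb{R}: s(x)=\infty\}$. An unbounded infinite discrete set $\Lambda=\{\lambda_1<\lambda_2<\cdots\}$ is asymptotically dense if $\lambda_n-\lambda_{n-1}\to0$, equivalently, for every $a>0$, $\#(\Lambda\cap[x,x+a])\to\infty$ as $x\to\infty$. $C_0^+(\mathbb{R})$ denotes the set of continuous functions $\mathbb{R}\to[0,+\infty)$ tending to $0$ at $+\infty$. *)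

From HB Require Import structures.
From mathcomp Require Import all_boot all_order all_algebra.
From mathcomp Require Import all_classical all_reals all_analysis.
Set Implicit Arguments. Unset Strict Implicit. Unset Printing Implicit Defensive.
Import Order.TTheory GRing.Theory Num.Theory.
Import numFieldNormedType.Exports.
Local Open Scope classical_set_scope.
Local Open Scope ring_scope.

(* An unbounded infinite discrete set Lambda = {lam_0 < lam_1 < ...} in [0,+oo)
   is encoded by its increasing enumeration lam : nat -> R
   (strictly increasing, lam 0 >= 0, lam n -> +oo). *)
Definition discrete_enum (R : realType) (lam : nat -> R) : Prop :=
  [/\ 0 <= lam 0%N,
      (forall n : nat, lam n < lam n.+1) &
      lam n @[n --> \oo] --> +oo].

Definition asymptotically_dense (R : realType) (lam : nat -> R) : Prop :=
  discrete_enum lam /\ (lam n.+1 - lam n) @[n --> \oo] --> 0.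

Definition C0plus (R : realType) (f : R -> R) : Prop :=
  [/\ continuous f, (forall x, 0 <= f x) & f x @[x --> +oo] --> 0].

Definition sfun (R : realType) (f : R -> R) (L : set R) (x : R) : \bar R :=
  (\esum_(l in L) (f (x + l))%:E)%E.

Definition Dset (R : realType) (f : R -> R) (L : set R) : set R :=
  [set x | sfun f L x = +oo%E].

From Pilot Require Import Defs.
From mathcomp Require Import all_boot all_order all_algebra.
From mathcomp Require Import all_classical all_reals all_analysis.
From mathcomp Require Import ring lra.

(* Lambda is a concatenation of finite blocks.  Block k consists of 4*4^k
   "coarse" points with spacing 2^-k, which make Lambda asymptotically dense,
   followed by a "cluster" of 64*8^k points packed into an interval of length
   2^-k.  The function f_G is a sum of bumps, one per block, with disjoint
   supports; near the k-th cluster the k-th bump is 1/#cluster times the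
   distance to the complement of G.  Shifting the k-th cluster by x therefore
   contributes about dist(x, ~G): at least half of it on G once 2^k is large,
   and at most 2^-k off G, where the distance at x + e is at most e.  The
   coarse points of block k+1 only meet f where it is below the height of
   bump k, and add O(2^-k).  So the block sums of s(x) stay above a positive
   constant on G and below a geometric sequence off G. *)

Set Implicit Arguments.
Unset Strict Implicit.
Unset Printing Implicit Defensive.

Import Order.TTheory GRing.Theory Num.Theory.
Import numFieldNormedType.Exports.
Local Open Scope classical_set_scope.

Section Blocks.
Variable size : nat -> nat.
Hypothesis size_gt0 : forall k, 0 < size k.

Definition block_start (k : nat) : nat := \sum_(j < k) size j.

Fixpoint block_coord (n : nat) : nat * nat :=
  if n is n'.+1 then
    let: (k, i) := block_coord n' in
    if i.+1 < size k then (k, i.+1) else (k.+1, 0)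
  else (0, 0).

Lemma block_startS k : block_start k.+1 = block_start k + size k.
Proof. exact: big_ord_recr. Qed.

Lemma leq_block_start m n : m <= n -> block_start m <= block_start n.
Proof.
apply: (homo_leq (r := leq)) => [//|y x z|k]; first exact: leq_trans.
by rewrite block_startS leq_addr.
Qed.

Lemma block_start_ge k : k <= block_start k.
Proof. by elim: k => // k IHk; rewrite block_startS -addn1 leq_add ?size_gt0. Qed.

Lemma block_coordK k i : i < size k -> block_coord (block_start k + i) = (k, i).
Proof.
have from_start j m : m < size j -> block_coord (block_start j) = (j, 0) ->
    block_coord (block_start j + m) = (j, m).
  move=> + start; elim: m => [|m IHm] lt_m; first by rewrite addn0.
  by rewrite addnS /= IHm ?(ltnW lt_m) // lt_m.
have start j : block_coord (block_start j) = (j, 0).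
  elim: j => [|j IHj]; first by rewrite /block_start big_ord0.
  rewrite block_startS -(prednK (size_gt0 j)) addnS /= from_start ?ltn_predL //.
  by rewrite prednK ?ltnn.
by move=> lt_i; rewrite from_start.
Qed.

Lemma block_coordP n : let: (k, i) := block_coord n in
  i < size k /\ block_start k + i = n.
Proof.
elim: n => [|n]; first by rewrite /= size_gt0 /block_start big_ord0.
rewrite /=; case: (block_coord n) => k i [lt_i <-].
case: ifP => [lt_Si | ge_i]; first by rewrite lt_Si addnS.
split; first exact: size_gt0.
rewrite block_startS addn0 -addnS; congr addn; apply/eqP.
by rewrite eqn_leq lt_i leqNgt ge_i.
Qed.

Lemma block_index_cvgy : (block_coord n).1 @[n --> \oo] --> \oo.
Proof.
apply/cvgnyPge => K; near=> n; rewrite leqNgt; apply/negP => lt_kK.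
have start_le : block_start K <= n by near: n; exact: nbhs_infty_ge.
move: (block_coordP n); case: (block_coord n) lt_kK => k i /= lt_kK [lt_i def_n].
have := leq_trans (leq_block_start lt_kK) start_le.
by rewrite block_startS -def_n leq_add2l leqNgt lt_i.
Unshelve. all: by end_near. Qed.

Lemma sum_block_start (V : nmodType) (u : nat -> V) K :
  (\sum_(n < block_start K) u n = \sum_(k < K) \sum_(i < size k) u (block_start k + i)%N)%R.
Proof.
elim: K => [|K IHK]; first by rewrite /block_start !big_ord0.
by rewrite big_ord_recr -IHK block_startS big_split_ord.
Qed.

Lemma nneseries_blocks (R : realType) (u : nat -> \bar R) : (forall n, 0 <= u n)%E ->
  (\sum_(n <oo) u n = \sum_(k <oo) \sum_(i < size k) u (block_start k + i)%N)%E.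
Proof.
move=> u_ge0.
have start_cvgy : block_start k @[k --> \oo] --> \oo.
  apply/cvgnyPge => N; near=> k; apply: leq_trans (block_start_ge k).
  by near: k; exact: nbhs_infty_ge.
have u_cvg := is_cvg_nneseries (P := xpredT) (N := 0) (fun n _ _ => u_ge0 n).
have /cvg_lim <- // := cvg_comp _ _ start_cvgy u_cvg.
by apply/congr_lim/funext => K /=; rewrite !big_mkord sum_block_start.
Unshelve. all: by end_near. Qed.

Variables (T : Type) (point : nat -> nat -> T).
Hypothesis point_next : forall k, point k.+1 0 = point k (size k).

Definition block_enum (n : nat) : T := point (block_coord n).1 (block_coord n).2.

Lemma block_enumE k i : i < size k -> block_enum (block_start k + i) = point k i.
Proof. by move=> lt_i; rewrite /block_enum block_coordK. Qed.

Lemma block_enumS n : block_enum n.+1 = point (block_coord n).1 (block_coord n).2.+1.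
Proof.
rewrite /block_enum /=; have := block_coordP n.
case: (block_coord n) => k i [lt_i _] /=; case: ifP => // ge_i.
by rewrite point_next; congr point; apply/eqP; rewrite eqn_leq lt_i leqNgt ge_i.
Qed.

End Blocks.

Definition ncoarse (k : nat) : nat := 4 * 2 ^ k * 2 ^ k.
Definition ncluster (k : nat) : nat := 64 * 2 ^ k * 2 ^ k * 2 ^ k.
Definition nblock (k : nat) : nat := ncoarse k + ncluster k.

Lemma ncluster_gt0 k : 0 < ncluster k.
Proof. by rewrite /ncluster !muln_gt0 expn_gt0. Qed.

Lemma nblock_gt0 k : 0 < nblock k.
Proof. by rewrite /nblock addn_gt0 ncluster_gt0 orbT. Qed.

Local Open Scope ring_scope.

Section NonnegativeSeries.
Variable R : realType.
Implicit Types (u : nat -> R) (c : R).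

Lemma nneseries_lty_geometric u c : (forall k, 0 <= u k) ->
  (\forall k \near \oo, u k <= c / 2 ^+ k) -> (\sum_(k <oo) (u k)%:E < +oo)%E.
Proof.
move=> u_ge0 [K _ u_le].
have c_ge0 : 0 <= c.
  have := le_trans (u_ge0 K) (u_le K (leqnn K)).
  by rewrite pmulr_lge0 // invr_gt0 exprn_gt0.
have geo n : \sum_(k < n) c / 2 ^+ k <= 2 * c.
  have half_gt0 : 0 < 2^-1 :> R by rewrite invr_gt0.
  have half_lt1 : `|2^-1| < 1 :> R by rewrite gtr0_norm // invf_lt1 ?ltr1n.
  have := geometric_le_lim n c_ge0 half_gt0 half_lt1.
  have -> : c / (1 - 2^-1) = 2 * c by field.
  rewrite /series /= big_mkord; apply: le_trans.
  by apply: ler_sum => k _; rewrite exprVn.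
apply: (@le_lt_trans _ _ (\sum_(k < K) u k + 2 * c)%:E); last exact: ltry.
apply: lime_le; first by apply: is_cvg_nneseries => k _ _; rewrite lee_fin.
apply: nearW => n; rewrite sumEFin lee_fin big_mkord.
apply: (@le_trans _ _ (\sum_(k < K + n) u k)).
  rewrite -(subnKC (leq_addl K n)) big_split_ord /= lerDl.
  by apply: sumr_ge0 => k _.
rewrite big_split_ord /= lerD2l; apply: le_trans (geo n); apply: ler_sum => k _.
apply: le_trans (u_le _ (leq_addr _ _)) _; rewrite ler_wpM2l // lef_pV2 ?posrE ?exprn_gt0 //.
by rewrite ler_eXn2l ?ltr1n // leq_addl.
Qed.

Lemma nneseries_pinfty_ge u c : 0 < c -> (forall k, 0 <= u k) ->
  (\forall k \near \oo, c <= u k) -> (\sum_(k <oo) (u k)%:E = +oo)%E.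
Proof.
move=> c_gt0 u_ge0 u_ge; apply/eqP/contraT; rewrite -ltey.
move=> /(nnseries_is_cvg u_ge0)/cvg_series_cvg_0/cvgr0Pnorm_lt/(_ c c_gt0) u_lt.
have [k [c_le lt_c]] := filter_ex (filterI u_ge u_lt).
by move: lt_c; rewrite ger0_norm // ltNge c_le.
Qed.

End NonnegativeSeries.

Section LocallyFiniteSum.
Variables (R : realType) (g : nat -> R -> R).
Hypothesis g_eq0 : forall k y, y <= k%:R -> g k y = 0.

Definition locsum (y : R) : R := \sum_(k < (Num.truncn y).+1) g k y.

Lemma locsumE m y : y <= m%:R -> locsum y = \sum_(k < m) g k y.
Proof.
move=> le_ym.
have trim a b : (a <= b)%N -> (forall k, (a <= k)%N -> g k y = 0) ->
    \sum_(k < b) g k y = \sum_(k < a) g k y.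
  move=> le_ab g0; rewrite -(subnKC le_ab) big_split_ord /= [X in _ + X]big1 ?addr0 // => k _.
  by rewrite g0 ?leq_addr.
rewrite /locsum -(trim _ _ (leq_maxl _ m)) ?(trim _ _ (leq_maxr (Num.truncn y).+1 m)) //.
- by move=> k le_mk; rewrite g_eq0 // (le_trans le_ym) ?ler_nat.
- by move=> k lt_yk; rewrite g_eq0 // ltW // (lt_le_trans (truncnS_gt y)) ?ler_nat.
Qed.

Lemma locsum_single j y : (forall k, k != j -> g k y = 0) -> locsum y = g j y.
Proof.
move=> g0; set m := maxn j.+1 (Num.truncn y).+1.
have lt_jm : (j < m)%N by rewrite leq_max ltnSn.
rewrite (@locsumE m); last first.
  by rewrite ltW // (lt_le_trans (truncnS_gt y)) // ler_nat leq_maxr.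
by rewrite (bigD1 (Ordinal lt_jm)) //= big1 ?addr0 // => k; apply: g0.
Qed.

Lemma continuous_locsum : (forall k, continuous (g k)) -> continuous locsum.
Proof.
move=> g_cont y; set m := (Num.truncn y).+1.
have near_y : \forall z \near y, \sum_(k < m) g k z = locsum z.
  near=> z; rewrite (@locsumE m) // ltW //.
  by near: z; exact: lt_nbhsl (truncnS_gt y).
apply: cvg_trans (near_eq_cvg near_y) _; rewrite -(nbhs_singleton near_y).
have : continuous (\sum_(k < m) g k).
  elim/big_ind: _ => [|F1 F2 F1_cont F2_cont z|k _]; last exact: g_cont.
    exact: cst_continuous.
  exact: cvgD (F1_cont z) (F2_cont z).
by rewrite fct_sumE; apply.
Unshelve. all: by end_near. Qed.

End LocallyFiniteSum.

Section DistanceToComplement.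
Variables (R : realType) (G : set R).

Let distC_set (z : R) : set R := [set 1] `|` [set `|z - a| | a in ~` G].

(* min(1, dist(z, ~` G)); the cap keeps the infimum meaningful when G = setT *)
Definition distC (z : R) : R := inf (distC_set z).

Let distC_set_lb z : lbound (distC_set z) 0.
Proof. by move=> _ [->|[a _ <-]]. Qed.

Let distC_set_n0 z : distC_set z !=set0.
Proof. by exists 1; left. Qed.

Let distC_set_has_lb z : has_lbound (distC_set z).
Proof. by exists 0; exact: distC_set_lb. Qed.

Lemma distC_ge0 z : 0 <= distC z.
Proof. exact: lb_le_inf (@distC_set_n0 z) (@distC_set_lb z). Qed.

Lemma distC_le1 z : distC z <= 1.
Proof. by apply: ge_inf; [exact: distC_set_has_lb | left]. Qed.

Lemma distC_out z : ~ G z -> distC z = 0.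
Proof.
move=> nGz; apply/eqP; rewrite eq_le distC_ge0 andbT.
by apply: ge_inf; [exact: distC_set_has_lb | right; exists z; rewrite ?subrr ?normr0].
Qed.

Lemma distC_lipschitz z w : distC z <= distC w + `|z - w|.
Proof.
rewrite -lerBlDr; apply: lb_le_inf; first exact: distC_set_n0.
move=> _ [->|[a nGa <-]]; rewrite lerBlDr.
  by apply: le_trans (distC_le1 z) _; rewrite lerDl.
apply: le_trans (_ : `|z - a| <= _).
  by apply: ge_inf; [exact: distC_set_has_lb | right; exists a].
have -> : z - a = (z - w) + (w - a) by rewrite addrA subrK.
by rewrite addrC ler_normD.
Qed.

Lemma continuous_distC : continuous distC.
Proof.
move=> z; apply/cvgrPdist_le => e e_gt0; near=> w.
have: `|distC z - distC w| <= `|z - w|.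
  rewrite ler_norml; have := distC_lipschitz z w; have := distC_lipschitz w z.
  rewrite distrC; lra.
move/le_trans; apply; near: w.
by move: e e_gt0; apply/cvgrPdist_le; exact: cvg_id.
Unshelve. all: by end_near. Qed.

Lemma distC_gt0 z : open G -> G z -> 0 < distC z.
Proof.
move=> G_open Gz; have /nbhs_ballP[r r_gt0 ball_G] : nbhs z G by exact: open_nbhs_nbhs.
apply: (@lt_le_trans _ _ (Num.min 1 r)); first by rewrite lt_min ltr01 r_gt0.
apply: lb_le_inf; first exact: distC_set_n0.
move=> _ [->|[a nGa <-]]; first by rewrite ge_min lexx.
rewrite ge_min; apply/orP; right; rewrite leNgt; apply/negP => lt_r.
by apply: nGa; apply: ball_G; rewrite -ball_normE.
Qed.

End DistanceToComplement.

Section Lambda.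
Variable R : realType.

Definition scale (k : nat) : R := 2 ^+ k.
Definition origin (k : nat) : R := \sum_(j < k) (4 * scale j + (scale j)^-1).
Definition cluster (k : nat) : R := origin k + 4 * scale k.
Definition mesh (k : nat) : R := (scale k * (ncluster k)%:R)^-1.
(* The first [ncoarse k] points of block k are spaced by [(scale k)^-1], the
   next [ncluster k] ones by [mesh k]; [minn] and truncated subtraction select
   the regime. *)
Definition point (k i : nat) : R :=
  origin k + (minn i (ncoarse k))%:R / scale k + (i - ncoarse k)%:R * mesh k.
Definition lambda : nat -> R := block_enum nblock point.

Lemma scale_gt0 k : 0 < scale k.
Proof. exact: exprn_gt0. Qed.

Lemma scaleS k : scale k.+1 = 2 * scale k.
Proof. exact: exprS. Qed.

Lemma natr_scale k : (2 ^ k)%:R = scale k.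
Proof. by rewrite natrX. Qed.

Lemma scale_ge k : k.+1%:R <= scale k.
Proof. by rewrite -natr_scale ler_nat ltn_expl. Qed.

Lemma nbhs_infty_scale a : \forall k \near \oo, a <= scale k.
Proof.
near=> k; have := scale_ge k.
have : a <= k%:R by near: k; exact: nbhs_infty_ger.
by rewrite -natr1; lra.
Unshelve. all: by end_near. Qed.

Lemma ncoarseE k : (ncoarse k)%:R = 4 * scale k * scale k.
Proof. by rewrite /ncoarse !natrM natr_scale. Qed.

Lemma nclusterE k : (ncluster k)%:R = 64 * scale k * scale k * scale k.
Proof. by rewrite /ncluster !natrM natr_scale. Qed.

Lemma ncluster_mesh k : (ncluster k)%:R * mesh k = (scale k)^-1.
Proof.
have := scale_gt0 k; have : 0 < (ncluster k)%:R :> R by rewrite ltr0n ncluster_gt0.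
by move=> ? ?; rewrite /mesh; field; rewrite !gt_eqF.
Qed.

Lemma mesh_gt0 k : 0 < mesh k.
Proof. by rewrite invr_gt0 mulr_gt0 ?scale_gt0 ?ltr0n ?ncluster_gt0. Qed.

Lemma mesh_le k : mesh k <= (scale k)^-1.
Proof.
rewrite -ncluster_mesh ler_peMl ?(ltW (mesh_gt0 k)) // ler1n.
exact: ncluster_gt0.
Qed.

Lemma mesh_offset k i : (i < ncluster k)%N -> 0 <= i%:R * mesh k < (scale k)^-1.
Proof.
move=> lt_i; rewrite -ncluster_mesh ltr_pM2r ?mesh_gt0 // ltr_nat lt_i andbT.
by rewrite mulr_ge0 // ltW // mesh_gt0.
Qed.

Lemma originS k : origin k.+1 = cluster k + (scale k)^-1.
Proof. by rewrite /origin big_ord_recr /= addrA. Qed.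

Lemma origin_ge k : k%:R <= origin k.
Proof.
elim: k => [|k IHk]; first by rewrite /origin big_ord0.
rewrite originS /cluster -natr1 -addrA lerD //.
have := scale_ge k; have : 0 < (scale k)^-1 by rewrite invr_gt0 scale_gt0.
rewrite -natr1; have := ler0n R k; lra.
Qed.

Lemma point_coarse k i : (i <= ncoarse k)%N -> point k i = origin k + i%:R / scale k.
Proof.
move=> le_iA; rewrite /point (minn_idPl le_iA).
by rewrite (eqP (_ : i - _ == 0)%N) ?subn_eq0 // mul0r addr0.
Qed.

Lemma point_cluster k i : point k (ncoarse k + i) = cluster k + i%:R * mesh k.
Proof.
rewrite /point (minn_idPr (leq_addr _ _)) addKn ncoarseE /cluster.
by have := scale_gt0 k => ?; field; rewrite gt_eqF.
Qed.

Lemma point_next k : point k.+1 0 = point k (nblock k).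
Proof.
rewrite point_coarse // mul0r addr0 /nblock point_cluster ncluster_mesh.
exact: originS.
Qed.

Lemma point_step k i :
  point k i.+1 - point k i = if (i < ncoarse k)%N then (scale k)^-1 else mesh k.
Proof.
case: ltnP => [lt_iA | le_Ai].
  rewrite !point_coarse ?(ltnW lt_iA) // -natr1.
  by have := scale_gt0 k => ?; field; rewrite gt_eqF.
rewrite -(subnKC le_Ai) -addnS !point_cluster -natr1; ring.
Qed.

Lemma lambda_step n :
  0 < lambda n.+1 - lambda n <= (scale (block_coord nblock n).1)^-1.
Proof.
rewrite /lambda (block_enumS nblock_gt0 point_next) /block_enum point_step.
case: ifP => _.
  by rewrite lexx andbT invr_gt0 scale_gt0.
by rewrite mesh_gt0 mesh_le.
Qed.

Lemma lambda_ge n : ((block_coord nblock n).1)%:R <= lambda n.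
Proof.
rewrite /lambda /block_enum; move: (block_coord nblock n) => [k i] /=.
apply: le_trans (origin_ge k) _; rewrite /point -addrA lerDl.
have t_ge0 := ltW (scale_gt0 k); have m_ge0 := ltW (mesh_gt0 k).
by apply: addr_ge0; apply: mulr_ge0 => //; rewrite invr_ge0.
Qed.

Lemma lambda_inj : injective lambda.
Proof.
apply: inc_inj; apply: le_mono; apply: homo_ltn => [y x z|n]; first exact: lt_trans.
by rewrite -subr_gt0; case/andP: (lambda_step n).
Qed.

Lemma lambda_dense : asymptotically_dense lambda.
Proof.
have index_cvgy := block_index_cvgy nblock_gt0.
split; first split.
- by rewrite /lambda /block_enum /= point_coarse // mul0r addr0 /origin big_ord0.
- by move=> n; have /andP[+ _] := lambda_step n; rewrite subr_gt0.
- apply/cvgryPge => a; near=> n; apply: le_trans (lambda_ge n).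
  by near: n; exact: index_cvgy _ (nbhs_infty_ger a).
- apply/cvgr0Pnorm_le => e e_gt0.
  near=> n; have /andP[gap_gt0 gap_le] := lambda_step n.
  rewrite ger0_norm ?(ltW gap_gt0) // (le_trans gap_le) //.
  rewrite -[e]invrK lef_pV2 ?posrE ?scale_gt0 ?invr_gt0 //.
  by near: n; exact: index_cvgy _ (nbhs_infty_scale e^-1).
Unshelve. all: by end_near. Qed.

Definition height (k : nat) : R := ((ncluster k)%:R)^-1.
Definition sep (k : nat) : R := origin k + 2 * scale k.

Lemma height_gt0 k : 0 < height k.
Proof. by rewrite invr_gt0 ltr0n ncluster_gt0. Qed.

Lemma ncluster_height k : (ncluster k)%:R * height k = 1.
Proof. by rewrite divff // pnatr_eq0 -lt0n ncluster_gt0. Qed.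

Lemma ncoarse_height k : (ncoarse k.+1)%:R * height k = (4 * scale k)^-1.
Proof.
rewrite /height ncoarseE nclusterE scaleS.
by have := scale_gt0 k => ?; field; rewrite gt_eqF.
Qed.

Lemma height_le_scale k : height k <= (scale k)^-1.
Proof.
rewrite /height nclusterE lef_pV2 ?posrE ?scale_gt0 ?mulr_gt0 ?scale_gt0 //.
have := scale_ge k; rewrite -natr1; have := ler0n R k; nra.
Qed.

Lemma le_height k m : (k <= m)%N -> height m <= height k.
Proof.
move=> le_km; rewrite lef_pV2 ?posrE ?ltr0n ?ncluster_gt0 // ler_nat /ncluster.
by rewrite !leq_mul // leq_pexp2l.
Qed.

Lemma cluster_sep k : cluster k = sep k + 2 * scale k.
Proof. rewrite /cluster /sep; ring. Qed.

Lemma sepS k : sep k.+1 = cluster k + 4 * scale k + (scale k)^-1.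
Proof. rewrite /sep originS scaleS; ring. Qed.

Lemma sep_ge k : k%:R <= sep k.
Proof.
apply: le_trans (origin_ge k) _; rewrite lerDl mulr_ge0 //; exact: ltW (scale_gt0 k).
Qed.

Lemma le_sep k m : (k <= m)%N -> sep k <= sep m.
Proof.
apply: (homo_leq (r := <=%R)) => [//|y x z|j]; first exact: le_trans.
rewrite sepS cluster_sep; have := scale_gt0 j.
have : 0 < (scale j)^-1 by rewrite invr_gt0 scale_gt0.
lra.
Qed.

End Lambda.

Section Witness.
Variables (R : realType) (G : set R).

Definition bump (k : nat) (y : R) : R :=
  height R k *
    Num.min (distC G (y - cluster R k)) (Num.max 0 (scale R k - `|y - cluster R k|)).

Definition witness : R -> R := locsum bump.

Lemma bump_ge0 k y : 0 <= bump k y.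
Proof.
by rewrite mulr_ge0 ?(ltW (height_gt0 R k)) // le_min distC_ge0 le_max lexx.
Qed.

Lemma bump_le_height k y : bump k y <= height R k.
Proof. by rewrite ler_piMr ?(ltW (height_gt0 R k)) // ge_min distC_le1. Qed.

Lemma bump_eq0 k y : y <= sep R k \/ sep R k.+1 <= y -> bump k y = 0.
Proof.
move=> y_out; have : scale R k <= `|y - cluster R k|.
  have := scale_gt0 R k; have := cluster_sep R k; have := sepS R k.
  have : 0 < (scale R k)^-1 by rewrite invr_gt0 scale_gt0.
  by case: y_out => ? ? ? ? ?; [rewrite ler0_norm | rewrite ger0_norm]; lra.
rewrite -subr_le0 => /max_idPl max0.
by rewrite /bump max0 (min_idPr (distC_ge0 _ _)) mulr0.
Qed.

Lemma continuous_bump k : continuous (bump k).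
Proof.
have shift_cont : continuous (fun y => y - cluster R k).
  by move=> y; apply: cvgB; [exact: cvg_id | exact: cvg_cst].
have dist_cont : continuous (fun y => distC G (y - cluster R k)).
  by move=> y; exact: continuous_comp (shift_cont y) (@continuous_distC _ G _).
have tent_cont : continuous (fun y => Num.max 0 (scale R k - `|y - cluster R k|)).
  apply: (@max_fun_continuous _ R R (cst 0) (fun y => scale R k - `|y - cluster R k|)).
    exact: cst_continuous.
  by move=> y; apply: cvgB; [exact: cvg_cst | apply: cvg_norm; exact: shift_cont].
move=> y; apply: cvgM; first exact: cvg_cst.
exact: (@min_fun_continuous _ R R _ _ dist_cont tent_cont).
Qed.

Let bump_eq0_low k y : y <= k%:R -> bump k y = 0.
Proof. by move=> le_yk; apply: bump_eq0; left; exact: le_trans (sep_ge R k). Qed.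

Lemma witness_ge0 y : 0 <= witness y.
Proof. by apply: sumr_ge0 => k _; exact: bump_ge0. Qed.

Lemma witnessE j y : sep R j <= y <= sep R j.+1 -> witness y = bump j y.
Proof.
move=> /andP[le_jy le_yj]; apply: (locsum_single bump_eq0_low) => k; rewrite neq_ltn.
case/orP => [lt_kj | lt_jk]; apply: bump_eq0; [right | left].
  exact: le_trans (le_sep R lt_kj) le_jy.
exact: le_trans le_yj (le_sep R lt_jk).
Qed.

Lemma exists_sep y : sep R 0 <= y -> exists j, sep R j <= y < sep R j.+1.
Proof.
move=> le_0y; suff: forall n, y < sep R n -> exists j, sep R j <= y < sep R j.+1.
  by apply; apply: lt_le_trans (truncnS_gt y) (sep_ge R _).
elim=> [|n IHn] lt_yn; first by move: lt_yn; rewrite ltNge le_0y.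
by case: (ltP y (sep R n)) => [/IHn // | le_ny]; exists n; rewrite le_ny lt_yn.
Qed.

Lemma witness_le_height m y : sep R m <= y -> witness y <= height R m.
Proof.
move=> le_my; have le_0y := le_trans (le_sep R (leq0n m)) le_my.
have [j /andP[le_jy lt_yj]] := exists_sep le_0y.
rewrite (@witnessE j) ?le_jy ?(ltW lt_yj) //.
apply: le_trans (bump_le_height j y) (le_height R _).
rewrite leqNgt; apply/negP => lt_jm.
by move: (le_trans (le_sep R lt_jm) le_my); rewrite leNgt lt_yj.
Qed.

Lemma witness_C0plus : C0plus witness.
Proof.
split; [exact: continuous_locsum bump_eq0_low continuous_bump | exact: witness_ge0 |].
apply/cvgr0Pnorm_le => e e_gt0.
have [m _ /(_ m (leqnn m)) le_em] := @nbhs_infty_scale R e^-1.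
near=> y; rewrite ger0_norm ?witness_ge0 //.
apply: le_trans (witness_le_height _) (le_trans (height_le_scale R m) _).
  by near: y; apply: nbhs_pinfty_ge; exact: num_real.
by rewrite -[e]invrK lef_pV2 ?posrE ?scale_gt0 ?invr_gt0.
Unshelve. all: by end_near. Qed.

Definition block_sum (x : R) (k : nat) : R := \sum_(i < nblock k) witness (x + point R k i).

Definition cluster_sum (x : R) (k : nat) : R :=
  \sum_(i < ncluster k) witness (x + (cluster R k + i%:R * mesh R k)).

Lemma sfun_block_sum x :
  Defs.sfun witness (range (lambda R)) x = (\sum_(k <oo) (block_sum x k)%:E)%E.
Proof.
have witness_ge0E y : (0 <= (witness y)%:E)%E by rewrite lee_fin witness_ge0.
rewrite /Defs.sfun esum_image; last by move=> m n _ _; exact: lambda_inj.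
rewrite -nneseries_esumT // (nneseries_blocks nblock_gt0) //.
apply/congr_lim/funext => K; apply: eq_bigr => k _; rewrite sumEFin.
by congr (_%:E); apply: eq_bigr => i _; rewrite /lambda (block_enumE nblock_gt0).
Qed.

Lemma block_sum_split x k :
  block_sum x k = \sum_(i < ncoarse k) witness (x + point R k i) + cluster_sum x k.
Proof.
by rewrite /block_sum big_split_ord; congr +%R; apply: eq_bigr => i _; rewrite point_cluster.
Qed.

Lemma witness_cluster x k e : `|x| <= scale R k -> 0 <= e <= (scale R k)^-1 ->
  witness (x + (cluster R k + e)) =
    height R k * Num.min (distC G (x + e)) (Num.max 0 (scale R k - `|x + e|)).
Proof.
move=> /[!ler_norml] /andP[x_ge x_le] /andP[e_ge0 e_le].
have -> : x + e = x + (cluster R k + e) - cluster R k by ring.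
apply: witnessE; have := cluster_sep R k; have := sepS R k; have := scale_gt0 R k.
by move=> *; apply/andP; split; lra.
Qed.

Lemma coarse_sum_le x k : `|x| <= scale R k ->
  \sum_(i < ncoarse k.+1) witness (x + point R k.+1 i) <= (4 * scale R k)^-1.
Proof.
move=> /[!ler_norml] /andP[x_ge _].
apply: (@le_trans _ _ (\sum_(i < ncoarse k.+1) height R k)).
  apply: ler_sum => i _; apply: witness_le_height.
  rewrite point_coarse 1?ltnW // originS cluster_sep.
  have : 0 <= i%:R / scale R k.+1 by rewrite divr_ge0 // ltW // scale_gt0.
  have : 0 < (scale R k)^-1 by rewrite invr_gt0 scale_gt0.
  by have := scale_gt0 R k; lra.
by rewrite sumr_const card_ord -[leLHS]mulr_natl ncoarse_height.
Qed.

Lemma cluster_sum_le x k : ~ G x -> `|x| <= scale R k -> cluster_sum x k <= (scale R k)^-1.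
Proof.
move=> nGx le_x.
apply: (@le_trans _ _ (\sum_(i < ncluster k) height R k * (scale R k)^-1)); last first.
  by rewrite sumr_const card_ord -[leLHS]mulr_natl mulrA ncluster_height mul1r.
apply: ler_sum => i _; have /andP[e_ge0 e_lt] := mesh_offset R (ltn_ord i).
rewrite witness_cluster ?e_ge0 ?(ltW e_lt) // ler_pM2l ?height_gt0 // ge_min.
apply/orP; left; apply: le_trans (distC_lipschitz G _ x) _.
by rewrite distC_out // add0r addrAC subrr add0r ger0_norm // ltW.
Qed.

Lemma cluster_sum_ge x k : `|x| + 2 <= scale R k -> 2 <= distC G x * scale R k ->
  distC G x / 2 <= cluster_sum x k.
Proof.
move=> le_x le_p; set p := distC G x in le_p *.
have p_ge0 : 0 <= p := distC_ge0 G x; have p_le1 : p <= 1 := distC_le1 G x.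
have t_gt0 := scale_gt0 R k.
have tV : scale R k * (scale R k)^-1 = 1 by rewrite mulfV // gt_eqF.
have inv_le : (scale R k)^-1 <= p / 2 by nra.
apply: (@le_trans _ _ (\sum_(i < ncluster k) height R k * (p / 2))).
  by rewrite sumr_const card_ord -[leRHS]mulr_natl mulrA ncluster_height mul1r.
apply: ler_sum => i _.
have /andP[e_ge0 e_lt] := mesh_offset R (ltn_ord i); set e := i%:R * mesh R k in e_ge0 e_lt *.
have x_le : `|x| <= scale R k by have := normr_ge0 x; lra.
rewrite witness_cluster ?e_ge0 ?(ltW e_lt) // ler_pM2l ?height_gt0 // le_min.
apply/andP; split.
  have := distC_lipschitz G x (x + e); rewrite -/p opprD addrA subrr sub0r normrN.
  by rewrite ger0_norm //; lra.
rewrite le_max; apply/orP; right.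
have : `|x + e| <= `|x| + e by rewrite -[X in _ <= _ + X]ger0_norm // ler_normD.
have : (scale R k)^-1 <= 1.
  by rewrite invr_le1 ?unitfE ?gt_eqF //; have := normr_ge0 x; lra.
lra.
Qed.

Lemma block_sum_le x k : ~ G x -> `|x| <= scale R k -> block_sum x k.+1 <= (scale R k)^-1.
Proof.
move=> nGx le_x; rewrite block_sum_split.
have t_gt0 := scale_gt0 R k.
have le_x' : `|x| <= scale R k.+1 by rewrite scaleS; have := normr_ge0 x; lra.
have := coarse_sum_le le_x; have := cluster_sum_le nGx le_x'.
rewrite scaleS !invfM; have : 0 < (scale R k)^-1 by rewrite invr_gt0.
lra.
Qed.

Lemma block_sum_ge0 x k : 0 <= block_sum x k.
Proof. by apply: sumr_ge0 => i _; exact: witness_ge0. Qed.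

Lemma sfun_lty x : ~ G x -> (Defs.sfun witness (range (lambda R)) x < +oo)%E.
Proof.
move=> nGx; rewrite sfun_block_sum.
apply: (@nneseries_lty_geometric _ _ 2) => [k|]; first exact: block_sum_ge0.
have [N _ x_le] := @nbhs_infty_scale R `|x|.
exists N.+1 => // -[//|k] /= /x_le/(block_sum_le nGx)/le_trans; apply.
by rewrite [X in _ / X]exprS invfM mulrA divff // mul1r.
Qed.

Lemma sfun_pinfty x : open G -> G x ->
  Defs.sfun witness (range (lambda R)) x = +oo%E.
Proof.
move=> G_open Gx; have p_gt0 := distC_gt0 G_open Gx.
rewrite sfun_block_sum.
apply: (@nneseries_pinfty_ge _ _ (distC G x / 2)) => [|k|]; first by rewrite divr_gt0.
  exact: block_sum_ge0.
near=> k; rewrite block_sum_split; apply: le_trans (@cluster_sum_ge x k _ _) _.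
- by near: k; exact: nbhs_infty_scale.
- by rewrite -ler_pdivrMl //; near: k; exact: nbhs_infty_scale.
- by rewrite lerDr; apply: sumr_ge0 => i _; exact: witness_ge0.
Unshelve. all: by end_near. Qed.

Lemma Dset_witness : open G -> Dset witness (range (lambda R)) = G.
Proof.
move=> G_open; apply/seteqP; split => x; last exact: sfun_pinfty.
by move=> Dx; apply: contrapT => /sfun_lty; rewrite Dx ltxx.
Qed.

End Witness.

Theorem theorem3p1 (R : realType) :
  exists lam : nat -> R, asymptotically_dense lam /\
    forall G : set R, open G ->
      exists f : R -> R, C0plus f /\ Dset f (range lam) = G.
Proof.
exists (lambda R); split; first exact: lambda_dense.
move=> G G_open; exists (witness G); split; [exact: witness_C0plus | exact: Dset_witness].
Qed.
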